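(* Let $d\ge 1$ and let $\mathcal{G}\in\mathbb{R}^{N_1\times\cdots\times N_d\times T}$ be a real tensor of order $d+1$. For each $n\in\{1,\dots,d\}$ let $1\le r_n<N_n$, and let $\Phi_n\in\mathbb{R}^{N_n\times r_n}$ be the matrix whose columns are the $r_n$ leading left singular vectors of the mode-$n$ unfolding $G_{(n)}$, i.e. the left factor of a truncated rank-$r_n$ SVD $G_{(n)}\approx \Phi_n\Sigma_{r_n}^{(n)}(V_{r_n}^{(n)})^\top$. Let $S_n\in\mathbb{R}^{N_n\times r_n}$ be obtained from a column-pivoted QR factorization $\Phi_n^\top[P_1^{(n)}\ P_2^{(n)}]=Q_1^{(n)}[R_{11}^{(n)}\ R_{12}^{(n)}]$ (with $[P_1^{(n)}\ P_2^{(n)}]$ an $N_n\times N_n$ permutation matrix) by setting $S_n:=P_1^{(n)}$, the first $r_n$ columns of the permutation matrix, and assume that $S_n^\top\Phi_n$ is invertible for every $1\le n\le d$. Define the matrices $\Pi_n:=\Phi_n(S_n^\top\Phi_n)^{-1}S_n^\top\in\mathbb{R}^{N_n\times N_n}$. Then $$\bigl\|\mathcal{G}-\mathcal{G}\times_1\Pi_1\times_2\Pi_2\cdots\times_d\Pi_d\bigr\|_F\;\le\;\Bigl(\prod_{n=1}^d\bigl\|(S_n^\top\Phi_n)^{-1}\bigr\|_2\Bigr)\Bigl(\sum_{n=1}^d\sum_{k>r_n}\sigma_k^2\bigl(G_{(n)}\bigr)\Bigr)^{1/2},$$ where $\sigma_k(G_{(n)})$ denotes the $k$-th largest singular value of 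$G_{(n)}$.
   Context: For a tensor $\mathcal{G}$ of order $m$ with entries $g_{i_1,\dots,i_m}$, the mode-$n$ unfolding (matricization) $G_{(n)}$ is the matrix whose rows are indexed by $i_n$ and whose columns are indexed by all remaining indices $(i_j)_{j\neq n}$ (in a fixed ordering). The mode-$n$ product of $\mathcal{G}$ with a matrix $M\in\mathbb{R}^{R\times N_n}$ is the tensor $\mathcal{Y}=\mathcal{G}\times_n M$ with entries $y_{i_1,\dots,j,\dots,i_m}=\sum_{k}g_{i_1,\dots,k,\dots,i_m}m_{jk}$ ($j$ in position $n$), equivalently $Y_{(n)}=MG_{(n)}$; products in distinct modes commute. $\|\mathcal{G}\|_F^2=\sum g_{i_1,\dots,i_m}^2$ is the Frobenius norm and $\|\cdot\|_2$ is the spectral norm of a matrix. Note that only the first $d$ (spatial) modes are multiplied; mode $d+1$ (of size $T$) is left unchanged. *)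

From HB Require Import structures.
From mathcomp Require Import all_boot all_order all_algebra perm.
From mathcomp Require Import boolp classical_sets reals.
Unset Printing Implicit Defensive.
Import Order.TTheory GRing.Theory Num.Theory.
Local Open Scope ring_scope.

Definition midx (d : nat) (N : 'I_d -> nat) := {dffun forall m : 'I_d, 'I_(N m)}.

Section Tensors.
Variable R : realType.
Variables (d : nat) (N : 'I_d -> nat) (T : nat).

Local Notation midx := {dffun forall m : 'I_d, 'I_(N m)}.

(* order-(d+1) tensor in R^{N_1 x ... x N_d x T}; last mode is time *)
Definition tensor := midx -> 'I_T -> R.

Definition upd (i : midx) (n : 'I_d) (k : 'I_(N n)) : midx :=
  finfun (fun m => if m == n then insubd (i m) (val k) else i m).

Definition mode_prod (G : tensor) (n : 'I_d) (M : 'M[R]_(N n)) : tensor :=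
  fun (i : midx) (t : 'I_T) => \sum_(k < N n) M (i n) k * G (upd i n k) t.

Definition mode_prods (G : tensor) (M : forall n : 'I_d, 'M[R]_(N n)) : tensor :=
  foldl (fun H n => mode_prod H n (M n)) G (enum 'I_d).

Definition tensor_sub (G H : tensor) : tensor := fun i t => G i t - H i t.

Definition frob (G : tensor) : R :=
  Num.sqrt (\sum_(i : midx) \sum_(t < T) G i t ^+ 2).

(* column indices of the mode-n unfolding: all remaining indices
   (i_m)_{m <> n} and t; realised as multi-indices whose n-th entry is 0 *)
Definition colidx (n : 'I_d) :=
  ({i : midx | nat_of_ord (i n) == 0%N} * 'I_T)%type.

Definition ncols (n : 'I_d) := #|{: colidx n}|.

(* mode-n unfolding G_(n) (columns in the fixed ordering given by enum) *)
Definition unfold (G : tensor) (n : 'I_d) : 'M[R]_(N n, ncols n) :=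
  \matrix_(a < N n, j < ncols n)
    let c := @enum_val (colidx n) predT j in G (upd (val c.1) n a) c.2.

End Tensors.

Section Matrices.
Variable R : realType.

(* full SVD  A = U diag(s) V^T, with U, V orthogonal, s nonnegative and
   nonincreasing; s k = sigma_{k+1}(A) (0-indexed), zero beyond min(m,p) *)
Definition is_svd {m p : nat} (A : 'M[R]_(m, p)) (U : 'M[R]_m) (s : nat -> R)
    (V : 'M[R]_p) : Prop :=
  [/\ U^T *m U = 1%:M, V^T *m V = 1%:M,
      (forall k, 0 <= s k) /\ (forall k l, (k <= l)%N -> s l <= s k),
      (forall k, (minn m p <= k)%N -> s k = 0) &
      A = U *m (\matrix_(i < m, j < p) if (i == j :> nat) then s i else 0) *m V^T].

Definition leading_cols {m p r : nat} (A : 'M[R]_(m, p)) (B : 'M[R]_(m, r)) : Prop :=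
  forall (i : 'I_m) (j : 'I_r) (j' : 'I_p), (j : nat) = j' -> B i j = A i j'.

(* column-pivoted (Businger-Golub) QR:  A P = Q [R11 R12], Q orthogonal,
   [R11 R12] upper trapezoidal, and the pivoting property: at step k the
   diagonal entry dominates the norms of the trailing parts of all later
   columns *)
Definition is_cpqr {r p : nat} (A : 'M[R]_(r, p)) (P : 'M[R]_p) (Q : 'M[R]_r)
    (Rm : 'M[R]_(r, p)) : Prop :=
  [/\ A *m P = Q *m Rm, Q^T *m Q = 1%:M,
      (forall (i : 'I_r) (j : 'I_p), (j < i)%N -> Rm i j = 0) &
      (forall (k : 'I_r) (k' j : 'I_p), (k : nat) = k' -> (k' <= j)%N ->
          \sum_(i < r | (k <= i)%N) Rm i j ^+ 2 <= Rm k k' ^+ 2)].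

Definition vnorm {n : nat} (x : 'cV[R]_n) : R := Num.sqrt (\sum_i x i 0 ^+ 2).

Definition spec_norm {m n : nat} (A : 'M[R]_(m, n)) : R :=
  sup [set vnorm (A *m x) | x in [set x : 'cV[R]_n | vnorm x = 1]].

End Matrices.

Arguments is_svd {R m p}.
Arguments leading_cols {R m p r}.
Arguments is_cpqr {R r p}.
Arguments vnorm {R n}.
Arguments spec_norm {R m n}.
Arguments mode_prod {R d N T}.
Arguments mode_prods {R d N T}.
Arguments tensor_sub {R d N T}.
Arguments frob {R d N T}.
Arguments unfold {R d N T}.
Arguments upd {d N}.

From HB Require Import structures.
From mathcomp Require Import all_boot all_order all_algebra perm.
From mathcomp Require Import boolp classical_sets functions reals.
From mathcomp Require Import ring lra.

(* Write P and Pi for the maps G |-> G x_1 P_1 ... x_d P_d and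
   G |-> G x_1 Pi_1 ... x_d Pi_d, where P_n = Phi_n Phi_n^T is the orthogonal
   projection onto the leading left singular vectors.  The projections
   satisfy Pi P = P and P Pi = Pi, so G - Pi G = y - Pi y with y = G - P G
   orthogonal to Pi y; the argument proving |I - Pi| = |Pi| for an oblique
   projection then gives |G - Pi G|^2 <= |Pi|^2 |G - P G|^2, and
   |Pi| <= prod_n |(S_n^T Phi_n)^-1| because S_n^T is a contraction.
   Since the P_n act on distinct modes, |G - P G|^2 <= sum_n |G - G x_n P_n|^2,
   and the n-th term is the tail sum_{k >= r_n} sigma_k^2 of the SVD of the
   mode-n unfolding. *)

Set Implicit Arguments.
Unset Strict Implicit.
Unset Printing Implicit Defensive.

Import Order.TTheory GRing.Theory Num.Theory.
Local Open Scope ring_scope.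

Section ProjectionBounds.
Variables (R : realFieldType) (V : lmodType R) (form : V -> V -> R).
Hypothesis formC : forall x y, form x y = form y x.
Hypothesis formDl : forall x y z, form (x + y) z = form x z + form y z.
Hypothesis formZl : forall a x z, form (a *: x) z = a * form x z.
Hypothesis form_ge0 : forall x, 0 <= form x x.

Lemma form0l z : form 0 z = 0.
Proof. by have := formZl 0 0 z; rewrite scale0r mul0r. Qed.

Lemma formBl x y z : form (x - y) z = form x z - form y z.
Proof. by rewrite formDl -scaleN1r formZl mulN1r. Qed.

Lemma formDr x y z : form z (x + y) = form z x + form z y.
Proof. by rewrite !(formC z) formDl. Qed.

Lemma formZr a x z : form z (a *: x) = a * form z x.
Proof. by rewrite !(formC z) formZl. Qed.

Lemma formBr x y z : form z (x - y) = form z x - form z y.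
Proof. by rewrite !(formC z) formBl. Qed.

Lemma form_orthD x y : form x y = 0 -> form (x + y) (x + y) = form x x + form y y.
Proof. by move=> xy; rewrite formDl !formDr (formC y) xy addr0 add0r. Qed.

Lemma form_orthB x y : form x y = 0 -> form (x - y) (x - y) = form x x + form y y.
Proof. by move=> xy; rewrite formBl !formBr (formC y) xy subr0 sub0r opprK. Qed.

Section OrthogonalProjection.
Variable P : {linear V -> V}.
Hypothesis P_sym : forall x y, form (P x) y = form x (P y).
Hypothesis P_id : forall x, P (P x) = P x.

Lemma form_sub_proj_proj x y : form (x - P x) (P y) = 0.
Proof. by rewrite -P_sym linearB /= P_id subrr form0l. Qed.

Lemma form_proj_le x : form (P x) (P x) <= form x x.
Proof.
have -> : x = (x - P x) + P x by rewrite subrK.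
rewrite linearD /= linearB /= P_id subrr add0r form_orthD ?form_sub_proj_proj //.
by rewrite lerDr form_ge0.
Qed.

Lemma form_sub_comp_proj_le (Q : {linear V -> V}) x :
    (forall y, P (Q y) = Q (P y)) ->
  form (x - Q (P x)) (x - Q (P x)) <= form (x - P x) (x - P x) + form (x - Q x) (x - Q x).
Proof.
move=> PQ; have -> : x - Q (P x) = (x - P x) + P (x - Q x).
  by rewrite linearB /= PQ addrA subrK.
by rewrite form_orthD ?form_sub_proj_proj // lerD2l form_proj_le.
Qed.

Lemma form_sub_oblique_le (Pi : {linear V -> V}) (c : R) x :
    (forall y, Pi (P y) = P y) -> (forall y, P (Pi y) = Pi y) ->
    (forall y, form (Pi y) (Pi y) <= c * form y y) -> 1 <= c ->
  form (x - Pi x) (x - Pi x) <= c * form (x - P x) (x - P x).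
Proof.
move=> PiP PPi Pi_le c_ge1.
set y := x - P x; set w := Pi y.
have Piy : w = Pi x - P x by rewrite /w /y linearB /= PiP.
have Pw : P w = w by rewrite PPi.
have Piw : Pi w = w by rewrite -Pw PiP.
have yw : form y w = 0 by rewrite -Pw form_sub_proj_proj.
have -> : x - Pi x = y - w by rewrite Piy /y opprB addrA subrK.
rewrite form_orthB //.
set u := form y y; set v := form w w.
have u0 : 0 <= u by exact: form_ge0.
have v0 : 0 <= v by exact: form_ge0.
(* [z] is chosen so that [Pi z = (u + v) w] while [|z|^2 = u v (u + v)]. *)
pose z := v *: y + u *: w.
have Piz : Pi z = (u + v) *: w by rewrite linearD !linearZ /= Piw -scalerDl addrC.
have z2 : form z z = v ^+ 2 * u + u ^+ 2 * v.
  rewrite form_orthD; last by rewrite formZl formZr yw !mulr0.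
  by rewrite !formZl !formZr -/u -/v; ring.
have := Pi_le z; rewrite Piz z2 formZl formZr -/v => key.
have [->|v_neq0] := eqVneq v 0; first by rewrite addr0; nra.
have v_gt0 : 0 < v by rewrite lt_def v_neq0.
have uv_gt0 : 0 < (u + v) * v by rewrite mulr_gt0 // ltr_wpDl.
nra.
Qed.

End OrthogonalProjection.
End ProjectionBounds.

Section MatrixNorms.
Variable R : realType.

Definition mxdot {m p} (X Y : 'M[R]_(m, p)) : R := \sum_i \sum_j X i j * Y i j.

Lemma mxdotC {m p} (X Y : 'M[R]_(m, p)) : mxdot X Y = mxdot Y X.
Proof. by apply: eq_bigr => i _; apply: eq_bigr => j _; rewrite mulrC. Qed.

Lemma mxdotDl {m p} (X Y Z : 'M[R]_(m, p)) : mxdot (X + Y) Z = mxdot X Z + mxdot Y Z.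
Proof.
rewrite /mxdot -big_split; apply: eq_bigr => i _.
by rewrite -big_split; apply: eq_bigr => j _; rewrite mxE mulrDl.
Qed.

Lemma mxdotZl {m p} a (X Z : 'M[R]_(m, p)) : mxdot (a *: X) Z = a * mxdot X Z.
Proof.
rewrite /mxdot mulr_sumr; apply: eq_bigr => i _.
by rewrite mulr_sumr; apply: eq_bigr => j _; rewrite mxE mulrA.
Qed.

Lemma mxdot_ge0 {m p} (X : 'M[R]_(m, p)) : 0 <= mxdot X X.
Proof. by do 2!apply: sumr_ge0 => ? _; rewrite -expr2 sqr_ge0. Qed.

Lemma mxdot_tr {m p} (X Y : 'M[R]_(m, p)) : mxdot X^T Y^T = mxdot X Y.
Proof. by rewrite /mxdot exchange_big; do 2!apply: eq_bigr => ? _; rewrite !mxE. Qed.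

Lemma mxdot_mull {m n p} (A : 'M[R]_(m, n)) (X : 'M[R]_(n, p)) Y :
  mxdot (A *m X) Y = mxdot X (A^T *m Y).
Proof.
rewrite /mxdot.
under eq_bigr => i _ do under eq_bigr => j _ do rewrite mxE mulr_suml.
under [RHS]eq_bigr => k _ do under eq_bigr => j _ do rewrite mxE mulr_sumr.
under eq_bigr => i _ do rewrite exchange_big.
rewrite exchange_big; apply: eq_bigr => k _; rewrite exchange_big.
by do 2!apply: eq_bigr => ? _; rewrite mxE mulrCA mulrA.
Qed.

Lemma mxdot_col {m p} (X : 'M[R]_(m, p)) : mxdot X X = \sum_j mxdot (col j X) (col j X).
Proof.
rewrite /mxdot exchange_big; apply: eq_bigr => j _; apply: eq_bigr => i _.
by rewrite big_ord1 !mxE.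
Qed.

Lemma mxdot_isometry {m n p} (Q : 'M[R]_(m, n)) (X : 'M[R]_(n, p)) :
  Q^T *m Q = 1%:M -> mxdot (Q *m X) (Q *m X) = mxdot X X.
Proof. by move=> QQ; rewrite mxdot_mull mulmxA QQ mul1mx. Qed.

Lemma mxdot_coisometry_le {m n p} (Q : 'M[R]_(m, n)) (X : 'M[R]_(m, p)) :
  Q^T *m Q = 1%:M -> mxdot (Q^T *m X) (Q^T *m X) <= mxdot X X.
Proof.
move=> QQ; pose P := Q *m Q^T.
have P_sym (Y Z : 'M_(m, p)) : mxdot (P *m Y) Z = mxdot Y (P *m Z).
  by rewrite mxdot_mull /P trmx_mul trmxK.
have P_id (Y : 'M_(m, p)) : P *m (P *m Y) = P *m Y by rewrite mulmxA /P mulmxA -(mulmxA Q) QQ mulmx1.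
have -> : mxdot (Q^T *m X) (Q^T *m X) = mxdot (P *m X) (P *m X).
  by rewrite P_sym P_id mxdot_mull trmxK mulmxA.
exact: (form_proj_le mxdotC mxdotDl mxdotZl mxdot_ge0 P_sym P_id).
Qed.

Lemma vnormE {m} (x : 'cV[R]_m) : vnorm x = Num.sqrt (mxdot x x).
Proof. by congr Num.sqrt; apply: eq_bigr => i _; rewrite big_ord1 expr2. Qed.

Lemma mxdot_delta {m} (i : 'I_m) : mxdot (delta_mx i 0 : 'cV[R]_m) (delta_mx i 0) = 1.
Proof.
rewrite /mxdot (bigD1 i) //= big_ord1 !mxE !eqxx mulr1 big1 ?addr0 // => k /negbTE ki.
by rewrite big_ord1 !mxE ki mul0r.
Qed.

Lemma unit_vector_entry_le1 {m} (x : 'cV[R]_m) i : vnorm x = 1 -> `|x i 0| <= 1.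
Proof.
rewrite vnormE => /(congr1 (fun t => t ^+ 2)); rewrite sqr_sqrtr ?mxdot_ge0 // expr1n.
move=> x1; rewrite -(expr_le1 (n := 2)) // real_normK ?num_real // -x1 /mxdot.
rewrite (bigD1 i) //= big_ord1 expr2 lerDl.
by apply: sumr_ge0 => k _; rewrite big_ord1 -expr2 sqr_ge0.
Qed.

Lemma mxdot0l {m p} (X : 'M[R]_(m, p)) : mxdot 0 X = 0.
Proof. by rewrite /mxdot big1 // => i _; rewrite big1 // => j _; rewrite mxE mul0r. Qed.

Lemma mxdot_eq0 {m p} (X : 'M[R]_(m, p)) : mxdot X X = 0 -> X = 0.
Proof.
move=> X0; apply/matrixP => i j; rewrite mxE.
have sq_ge0 k l : 0 <= X k l * X k l by rewrite -expr2 sqr_ge0.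
have row0 := psumr_eq0P (fun k _ => sumr_ge0 _ (fun l _ => sq_ge0 k l)) X0.
have /eqP := @psumr_eq0P _ _ _ _ (fun l _ => sq_ge0 i l) (row0 i isT) j isT.
by rewrite mulf_eq0 orbb => /eqP.
Qed.

Lemma vnormZ {m} a (x : 'cV[R]_m) : vnorm (a *: x) = `|a| * vnorm x.
Proof.
rewrite !vnormE mxdotZl [mxdot x _]mxdotC mxdotZl mulrA -expr2.
by rewrite sqrtrM ?sqr_ge0 // sqrtr_sqr.
Qed.

Section SpectralNorm.
Variables (m q : nat) (M : 'M[R]_(m, q)).
Hypothesis q_gt0 : (0 < q)%N.

Lemma spec_norm_has_sup :
  has_sup [set vnorm (M *m x) | x in [set x : 'cV[R]_q | vnorm x = 1]].
Proof.
split.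
  exists (vnorm (M *m delta_mx (Ordinal q_gt0) 0)); exists (delta_mx (Ordinal q_gt0) 0) => //.
  by rewrite /= vnormE mxdot_delta sqrtr1.
exists (Num.sqrt (\sum_i (\sum_j `|M i j|) ^+ 2)) => _ [x /= x1 <-].
rewrite /vnorm ler_sqrt; last by apply: sumr_ge0 => i _; apply: sqr_ge0.
apply: ler_sum => i _; rewrite mxE.
have Mx_le : `|\sum_j M i j * x j 0| <= \sum_j `|M i j|.
  apply: le_trans (ler_norm_sum _ _ _) _; apply: ler_sum => j _.
  by rewrite normrM ler_piMr // unit_vector_entry_le1.
rewrite -(real_normK (num_real _)).
by apply: lerXn2r; rewrite ?nnegrE ?sumr_ge0.
Qed.

Lemma spec_norm_ge0 : 0 <= spec_norm M.
Proof.
have [[_ [x x1 _]] _] := spec_norm_has_sup.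
apply: le_trans (sup_upper_bound spec_norm_has_sup (ex_intro2 _ _ x x1 erefl)).
exact: sqrtr_ge0.
Qed.

Lemma vnorm_mul_le (w : 'cV[R]_q) : vnorm (M *m w) <= spec_norm M * vnorm w.
Proof.
have [w0|w_neq0] := eqVneq (mxdot w w) 0.
  by rewrite (mxdot_eq0 w0) mulmx0 !vnormE !mxdot0l sqrtr0 mulr0.
have w_gt0 : 0 < vnorm w by rewrite vnormE sqrtr_gt0 lt_def w_neq0 mxdot_ge0.
have unit_w : vnorm ((vnorm w)^-1 *: w) = 1.
  by rewrite vnormZ ger0_norm ?invr_ge0 ?ltW // mulVf // gt_eqF.
have := sup_upper_bound spec_norm_has_sup (ex_intro2 _ _ _ unit_w erefl).
rewrite -scalemxAr vnormZ ger0_norm; last by rewrite invr_ge0 ltW.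
by rewrite ler_pdivrMl // [_ * vnorm w]mulrC.
Qed.

Lemma mxdot_mul_le {p} (X : 'M[R]_(q, p)) :
  mxdot (M *m X) (M *m X) <= spec_norm M ^+ 2 * mxdot X X.
Proof.
rewrite !mxdot_col mulr_sumr; apply: ler_sum => j _.
have -> : col j (M *m X) = M *m col j X by rewrite !colE mulmxA.
rewrite -(sqr_sqrtr (mxdot_ge0 (col j X))) -(sqr_sqrtr (mxdot_ge0 (M *m _))).
rewrite -exprMn -!vnormE lerXn2r ?nnegrE ?vnorm_mul_le ?mulr_ge0 ?spec_norm_ge0 //.
all: exact: sqrtr_ge0.
Qed.

Lemma spec_norm_ge1 (A : 'M[R]_(q, m)) :
    (forall x : 'cV[R]_m, mxdot (A *m x) (A *m x) <= mxdot x x) -> A *m M = 1%:M ->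
  1 <= spec_norm M.
Proof.
move=> A_le AM; set e : 'cV[R]_q := delta_mx (Ordinal q_gt0) 0.
have e1 : mxdot e e = 1 by exact: mxdot_delta.
have : mxdot e e <= spec_norm M ^+ 2 * mxdot e e.
  have {1 2}-> : e = A *m (M *m e) by rewrite mulmxA AM mul1mx.
  exact: le_trans (A_le _) (mxdot_mul_le _).
have := spec_norm_ge0; rewrite e1; nra.
Qed.

End SpectralNorm.

Lemma leading_colsE {m p r} (A : 'M[R]_(m, p)) (B : 'M[R]_(m, r)) :
  (r <= p)%N -> leading_cols A B -> B = A *m pid_mx r.
Proof.
move=> le_rp AB; apply/matrixP => i j; rewrite mxE (AB i j (widen_ord le_rp j)) //.
rewrite (bigD1 (widen_ord le_rp j)) //= mxE /= eqxx ltn_ord mulr1 big1 ?addr0 // => k.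
by rewrite -val_eqE mxE /= => /negbTE ->; rewrite mulr0.
Qed.

Lemma leading_cols_orthonormal {m p r} (Q : 'M[R]_(m, p)) (B : 'M[R]_(m, r)) :
  (r <= p)%N -> Q^T *m Q = 1%:M -> leading_cols Q B -> B^T *m B = 1%:M.
Proof.
move=> le_rp QQ /(leading_colsE le_rp) ->.
by rewrite trmx_mul mulmxA -(mulmxA _ Q^T) QQ mulmx1 tr_pid_mx pid_mx_id // pid_mx_1.
Qed.

Lemma svd_trunc_error {m p r} (X : 'M[R]_(m, p)) U s V (Phi : 'M[R]_(m, r)) :
    (r <= m)%N -> is_svd X U s V -> leading_cols U Phi ->
  mxdot (X - Phi *m Phi^T *m X) (X - Phi *m Phi^T *m X) =
  \sum_(r <= k < minn m p) s k ^+ 2.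
Proof.
move=> le_rm [UU VV _ _ ->] /(leading_colsE le_rm) ->.
set D := \matrix_(i, j) _.
have -> : U *m D *m V^T - U *m pid_mx r *m (U *m (pid_mx r : 'M_(m, r)))^T *m (U *m D *m V^T) =
    U *m (copid_mx r *m D *m V^T).
  rewrite trmx_mul tr_pid_mx !mulmxA -(mulmxA _ U^T U) UU mulmx1.
  by rewrite -(mulmxA U (pid_mx r)) pid_mx_id // /copid_mx mulmxBr mulmx1 !mulmxBl ?mulmxA.
rewrite mxdot_isometry // -mxdot_tr trmx_mul trmxK mxdot_isometry // mxdot_tr.
have tailD i j : (copid_mx r *m D) i j = if (r <= i)%N && (i == j :> nat) then s i else 0.
  rewrite mxE (bigD1 i) //= big1 ?addr0 => [|k]; rewrite !mxE ?eqxx.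
    by case: leqP => ri; rewrite ?subr0 ?subrr ?mul0r ?mul1r // -if_and andbC.
  by rewrite eq_sym -val_eqE => /negbTE ->; rewrite subrr mul0r.
transitivity (\sum_(i < m) if (r <= i < p)%N then s i ^+ 2 else 0).
  apply: eq_bigr => i _; under eq_bigr => j _ do rewrite tailD -expr2.
  case: ltnP => [ip|pi]; last first.
    rewrite andbF big1 // => j _; case: ifP => [/andP[_ /eqP ij]|_]; last by rewrite expr0n.
    by move: pi; rewrite ij leqNgt ltn_ord.
  rewrite andbT (bigD1 (Ordinal ip)) //= eqxx andbT big1 ?addr0 => [|j].
    by case: ifP => //; rewrite expr0n.
  by rewrite -val_eqE /= eq_sym => /negbTE ->; rewrite andbF expr0n.
rewrite (big_nat_widen _ _ m) ?geq_minl // big_geq_mkord [RHS]big_mkcond /=.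
by apply: eq_bigr => i _; rewrite leq_min ltn_ord andTb andbC.
Qed.

End MatrixNorms.

Section Tensors.
Context {R : realType} {d : nat} {N : 'I_d -> nat} {T : nat}.
Local Notation midx := (midx d N).
Local Notation tensor := (tensor R d N T).
Local Notation colidx := (colidx d N T).
Local Notation ncols := (ncols d N T).

HB.instance Definition _ := GRing.Lmodule.copy tensor (midx -> 'I_T -> R^o).

Implicit Types G H K : tensor.

Lemma tensorDE G H i t : (G + H) i t = G i t + H i t. Proof. by []. Qed.

Lemma tensorZE a G i t : (a *: G) i t = a * G i t. Proof. by []. Qed.

Lemma val_upd (i : midx) n k m :
  val (upd i n k m) = if m == n then val k else val (i m).
Proof.
rewrite /upd ffunE; case: (eqVneq m n) => [->|//].
by rewrite val_insubd ltn_ord.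
Qed.

Lemma upd_eq (i : midx) n k : upd i n k n = k.
Proof. by apply: val_inj; rewrite val_upd eqxx. Qed.

Lemma upd_neq (i : midx) n k m : m != n -> upd i n k m = i m.
Proof. by move=> mn; apply: val_inj; rewrite val_upd (negbTE mn). Qed.

Lemma upd_upd (i : midx) n k l : upd (upd i n k) n l = upd i n l.
Proof. by apply/ffunP => m; apply: val_inj; rewrite !val_upd; case: eqVneq. Qed.

Lemma upd_id (i : midx) n : upd i n (i n) = i.
Proof. by apply/ffunP => m; apply: val_inj; rewrite val_upd; case: eqVneq => [->|]. Qed.

Lemma updC (i : midx) n m k l : m != n ->
  upd (upd i n k) m l = upd (upd i m l) n k.
Proof.
move=> mn; apply/ffunP => j; apply: val_inj; rewrite !val_upd.
by case: (eqVneq j m) => [->|]; [rewrite (negbTE mn) | case: eqVneq].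
Qed.

Definition tdot (G H : tensor) : R := \sum_i \sum_t G i t * H i t.

Lemma tdotC G H : tdot G H = tdot H G.
Proof. by apply: eq_bigr => i _; apply: eq_bigr => t _; rewrite mulrC. Qed.

Lemma tdotDl G H K : tdot (G + H) K = tdot G K + tdot H K.
Proof.
rewrite /tdot -big_split; apply: eq_bigr => i _.
by rewrite -big_split; apply: eq_bigr => t _; rewrite mulrDl.
Qed.

Lemma tdotZl a G K : tdot (a *: G) K = a * tdot G K.
Proof.
rewrite /tdot mulr_sumr; apply: eq_bigr => i _.
by rewrite mulr_sumr; apply: eq_bigr => t _; rewrite mulrA.
Qed.

Lemma tdot_ge0 G : 0 <= tdot G G.
Proof. by do 2!apply: sumr_ge0 => ? _; rewrite -expr2 sqr_ge0. Qed.

Lemma frobE G : frob G = Num.sqrt (tdot G G).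
Proof. by congr Num.sqrt; do 2!apply: eq_bigr => ? _; rewrite expr2. Qed.

Lemma sum_unfold n (F : midx -> 'I_T -> R) :
  \sum_i \sum_t F i t =
  \sum_(a < N n) \sum_(j < ncols n)
     F (upd (val (@enum_val (colidx n) predT j).1) n a) (@enum_val (colidx n) predT j).2.
Proof.
transitivity (\sum_(a < N n) \sum_(c : colidx n) F (upd (val c.1) n a) c.2); last first.
  by apply: eq_bigr => a _; rewrite (big_enum_val (A := predT)).
under [RHS]eq_bigr => a _ do rewrite -(pair_bigA _ (fun c t => F (upd (val c) n a) t)).
rewrite (pair_bigA _ (fun a c => \sum_t F (upd (val c) n a) t)) /=.
pose zero_at (i : midx) : 'I_(N n) := insubd (i n) 0%N.
have val_zero_at i : val (zero_at i) = 0%N.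
  by rewrite val_insubd (leq_ltn_trans (leq0n _) (ltn_ord (i n))).
have zero_atP i : nat_of_ord (upd i n (zero_at i) n) == 0%N by rewrite upd_eq val_zero_at.
pose split_at (i : midx) : 'I_(N n) * {j : midx | nat_of_ord (j n) == 0%N} :=
  (i n, exist (fun j : midx => nat_of_ord (j n) == 0%N) _ (zero_atP i)).
rewrite (reindex split_at) /=; last first.
  apply: onW_bij; exists (fun p => upd (val p.2) n p.1) => [i|[a [i i0]]] /=.
    by rewrite upd_upd upd_id.
  rewrite /split_at upd_eq; congr pair; apply: val_inj; rewrite /= upd_upd.
  apply/ffunP => m; apply: val_inj; rewrite val_upd.
  by case: eqVneq => [->|//]; rewrite val_zero_at; apply/esym/eqP.
by apply: eq_bigr => i _; rewrite upd_upd upd_id.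
Qed.

Lemma tdot_unfold n G H : tdot G H = mxdot (unfold G n) (unfold H n).
Proof.
rewrite /tdot (sum_unfold n (fun i t => G i t * H i t)).
by do 2!apply: eq_bigr => ? _; rewrite !mxE.
Qed.

Lemma unfoldB n G H : unfold (G - H) n = unfold G n - unfold H n.
Proof. by apply/matrixP => a j; rewrite !mxE. Qed.

Lemma unfold_mode_prod n G (A : 'M[R]_(N n)) :
  unfold (mode_prod G n A) n = A *m unfold G n.
Proof.
apply/matrixP => a j; rewrite !mxE /mode_prod upd_eq.
by apply: eq_bigr => k _; rewrite !mxE upd_upd.
Qed.

Lemma mode_prodP n (M : 'M[R]_(N n)) a G H :
  mode_prod (a *: G + H) n M = a *: mode_prod G n M + mode_prod H n M.
Proof.
apply: funext => i; apply: funext => t.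
rewrite tensorDE tensorZE /mode_prod mulr_sumr -big_split; apply: eq_bigr => k _.
by rewrite tensorDE tensorZE mulrDr mulrCA.
Qed.

Lemma mode_prod_mul n (A B : 'M[R]_(N n)) G :
  mode_prod (mode_prod G n B) n A = mode_prod G n (A *m B).
Proof.
apply: funext => i; apply: funext => t; rewrite /mode_prod.
under eq_bigr => k _ do rewrite upd_eq mulr_sumr.
rewrite exchange_big /=; apply: eq_bigr => l _.
by rewrite mxE mulr_suml; apply: eq_bigr => k _; rewrite upd_upd mulrA.
Qed.

Lemma mode_prodC n m (A : 'M[R]_(N n)) (B : 'M[R]_(N m)) G : m != n ->
  mode_prod (mode_prod G n A) m B = mode_prod (mode_prod G m B) n A.
Proof.
move=> mn; have nm : n != m by rewrite eq_sym.
apply: funext => i; apply: funext => t; rewrite /mode_prod.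
under eq_bigr => k _ do rewrite (upd_neq _ _ nm) mulr_sumr.
rewrite exchange_big /=; apply: eq_bigr => l _.
rewrite (upd_neq _ _ mn) mulr_sumr; apply: eq_bigr => k _.
by rewrite updC // mulrCA.
Qed.

Lemma tdot_mode_prodl n (A : 'M[R]_(N n)) G H :
  tdot (mode_prod G n A) H = tdot G (mode_prod H n A^T).
Proof. by rewrite !(tdot_unfold n) !unfold_mode_prod mxdot_mull. Qed.

Lemma tdot_mode_prod_le n (A : 'M[R]_(N n)) c G :
    (forall X : 'M[R]_(N n, ncols n), mxdot (A *m X) (A *m X) <= c * mxdot X X) ->
  tdot (mode_prod G n A) (mode_prod G n A) <= c * tdot G G.
Proof. by move=> A_le; rewrite !(tdot_unfold n) unfold_mode_prod A_le. Qed.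
Lemma tdot_sub_mode_trunc_svd n G U s V r (Phi : 'M[R]_(N n, r)) :
    (r <= N n)%N -> is_svd (unfold G n) U s V -> leading_cols U Phi ->
  tdot (G - mode_prod G n (Phi *m Phi^T)) (G - mode_prod G n (Phi *m Phi^T)) =
  \sum_(r <= k < minn (N n) (ncols n)) s k ^+ 2.
Proof.
move=> le_rN svdG Phi_lead.
by rewrite (tdot_unfold n) unfoldB unfold_mode_prod (svd_trunc_error le_rN svdG Phi_lead).
Qed.

Definition mode_prod_seq (l : seq 'I_d) (A : forall n, 'M[R]_(N n)) G : tensor :=
  foldl (fun H n => mode_prod H n (A n)) G l.

Lemma mode_prod_seq_cons n l A G :
  mode_prod_seq (n :: l) A G = mode_prod_seq l A (mode_prod G n (A n)).
Proof. by []. Qed.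

Fact mode_prod_seq_is_linear l A : linear (mode_prod_seq l A).
Proof. by elim: l => [//|n l IHl] a G H; rewrite !mode_prod_seq_cons mode_prodP IHl. Qed.

HB.instance Definition _ l A :=
  GRing.isLinear.Build R tensor tensor *:%R (mode_prod_seq l A) (mode_prod_seq_is_linear l A).

Lemma mode_prod_seq_commute l A n (B : 'M[R]_(N n)) G : n \notin l ->
  mode_prod (mode_prod_seq l A G) n B = mode_prod_seq l A (mode_prod G n B).
Proof.
elim: l G => [//|m l IHl] G; rewrite inE negb_or => /andP[nm nl].
by rewrite !mode_prod_seq_cons IHl // mode_prodC.
Qed.

Lemma mode_prod_seqM l A B C G : uniq l -> (forall n, A n *m B n = C n) ->
  mode_prod_seq l A (mode_prod_seq l B G) = mode_prod_seq l C G.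
Proof.
move=> + ABC; elim: l G => [//|n l IHl] G; rewrite cons_uniq => /andP[nl l_uniq].
by rewrite !mode_prod_seq_cons mode_prod_seq_commute // mode_prod_mul ABC IHl.
Qed.

Lemma tdot_mode_prod_seq_sym l A G H : uniq l -> (forall n, (A n)^T = A n) ->
  tdot (mode_prod_seq l A G) H = tdot G (mode_prod_seq l A H).
Proof.
move=> + A_sym; elim: l G H => [//|n l IHl] G H; rewrite cons_uniq => /andP[nl l_uniq].
by rewrite !mode_prod_seq_cons IHl // tdot_mode_prodl A_sym mode_prod_seq_commute.
Qed.

Lemma tdot_mode_prod_seq_le l A (c : 'I_d -> R) G :
    (forall n (X : 'M[R]_(N n, ncols n)), mxdot (A n *m X) (A n *m X) <= c n * mxdot X X) ->
    (forall n, 0 <= c n) ->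
  tdot (mode_prod_seq l A G) (mode_prod_seq l A G) <= (\prod_(n <- l) c n) * tdot G G.
Proof.
move=> A_le c_ge0; elim: l G => [|n l IHl] G; first by rewrite big_nil mul1r.
rewrite mode_prod_seq_cons big_cons [c n * _]mulrC -mulrA; apply: le_trans (IHl _) _.
by rewrite ler_wpM2l ?prodr_ge0 //; apply: tdot_mode_prod_le.
Qed.

Lemma tdot_sub_mode_prod_seq_le l A G : uniq l ->
    (forall n, (A n)^T = A n) -> (forall n, A n *m A n = A n) ->
  tdot (G - mode_prod_seq l A G) (G - mode_prod_seq l A G) <=
  \sum_(n <- l) tdot (G - mode_prod G n (A n)) (G - mode_prod G n (A n)).
Proof.
move=> + A_sym A_id; elim: l G => [|n l IHl] G; rewrite ?cons_uniq.
  by rewrite big_nil subrr /tdot big1 // => i _; rewrite big1 // => t _; rewrite mulr0.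
move=> /andP[nl l_uniq]; rewrite big_cons mode_prod_seq_cons.
have P_sym x y : tdot (mode_prod_seq [:: n] A x) y = tdot x (mode_prod_seq [:: n] A y).
  by rewrite tdot_mode_prodl A_sym.
have P_id x : mode_prod_seq [:: n] A (mode_prod_seq [:: n] A x) = mode_prod_seq [:: n] A x.
  by rewrite /= mode_prod_mul A_id.
have PQ x : mode_prod_seq [:: n] A (mode_prod_seq l A x) = mode_prod_seq l A (mode_prod_seq [:: n] A x).
  exact: mode_prod_seq_commute.
have := form_sub_comp_proj_le tdotC tdotDl tdotZl tdot_ge0 P_sym P_id G PQ.
by move=> /= /le_trans; apply; rewrite lerD2l IHl.
Qed.

End Tensors.

Section InterpolatoryProjection.
Variables (R : realType) (m r : nat) (Phi S : 'M[R]_(m, r)).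
Hypothesis Phi_orth : Phi^T *m Phi = 1%:M.
Hypothesis S_orth : S^T *m S = 1%:M.
Hypothesis SPhi_unit : S^T *m Phi \in unitmx.
Local Notation M := (invmx (S^T *m Phi)).

Lemma orth_proj_tr : (Phi *m Phi^T)^T = Phi *m Phi^T.
Proof. by rewrite trmx_mul trmxK. Qed.

Lemma orth_proj_id : Phi *m Phi^T *m (Phi *m Phi^T) = Phi *m Phi^T.
Proof. by rewrite mulmxA -(mulmxA Phi) Phi_orth mulmx1. Qed.

Lemma interp_proj_orth_proj : Phi *m M *m S^T *m (Phi *m Phi^T) = Phi *m Phi^T.
Proof. by rewrite !mulmxA -(mulmxA (Phi *m M)) -(mulmxA Phi) mulVmx // mulmx1. Qed.

Lemma orth_proj_interp_proj : Phi *m Phi^T *m (Phi *m M *m S^T) = Phi *m M *m S^T.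
Proof. by rewrite !mulmxA -(mulmxA Phi) Phi_orth mulmx1. Qed.

Hypothesis r_gt0 : (0 < r)%N.

Lemma mxdot_interp_proj_le p (X : 'M[R]_(m, p)) :
  mxdot (Phi *m M *m S^T *m X) (Phi *m M *m S^T *m X) <= spec_norm M ^+ 2 * mxdot X X.
Proof.
rewrite -!mulmxA mxdot_isometry //; apply: le_trans (mxdot_mul_le _ r_gt0 _) _.
by rewrite ler_wpM2l ?sqr_ge0 ?mxdot_coisometry_le.
Qed.

Lemma spec_norm_interp_ge1 : 1 <= spec_norm M.
Proof.
apply: (spec_norm_ge1 r_gt0 (A := S^T *m Phi)); last exact: mulmxV.
by move=> x; rewrite -mulmxA -(mxdot_isometry x Phi_orth) mxdot_coisometry_le.
Qed.

End InterpolatoryProjection.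

Section TensorInterpolation.
Context {R : realType} {d : nat} {N : 'I_d -> nat} {T : nat}.
Variables (r : 'I_d -> nat) (Phi S : forall n, 'M[R]_(N n, r n)).
Hypothesis r_gt0 : forall n, (0 < r n)%N.
Hypothesis Phi_orth : forall n, (Phi n)^T *m Phi n = 1%:M.
Hypothesis S_orth : forall n, (S n)^T *m S n = 1%:M.
Hypothesis SPhi_unit : forall n, (S n)^T *m Phi n \in unitmx.
Local Notation kappa n := (spec_norm (invmx ((S n)^T *m Phi n))).
Let Pm n := Phi n *m (Phi n)^T.
Let Pi n := Phi n *m invmx ((S n)^T *m Phi n) *m (S n)^T.

Lemma tdot_sub_interp_proj_le l (G : tensor R d N T) : uniq l ->
  tdot (G - mode_prod_seq l Pi G) (G - mode_prod_seq l Pi G) <=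
  (\prod_(n <- l) kappa n ^+ 2) * tdot (G - mode_prod_seq l Pm G) (G - mode_prod_seq l Pm G).
Proof.
move=> l_uniq.
pose P : {linear tensor R d N T -> tensor R d N T} := mode_prod_seq l Pm.
pose Pi_l : {linear tensor R d N T -> tensor R d N T} := mode_prod_seq l Pi.
have P_sym x y : tdot (P x) y = tdot x (P y).
  by rewrite /P tdot_mode_prod_seq_sym // => n; apply: orth_proj_tr.
have P_id x : P (P x) = P x.
  by rewrite /P /= (mode_prod_seqM (C := Pm)) // => n; apply: orth_proj_id.
apply: (form_sub_oblique_le tdotC tdotDl tdotZl tdot_ge0 P_sym P_id (Pi := Pi_l)).
- by move=> x; rewrite /P /Pi_l /= (mode_prod_seqM (C := Pm)) // => n; apply: interp_proj_orth_proj.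
- by move=> x; rewrite /P /Pi_l /= (mode_prod_seqM (C := Pi)) // => n; apply: orth_proj_interp_proj.
- move=> x; apply: tdot_mode_prod_seq_le => [n X|n]; last exact: sqr_ge0.
  exact: mxdot_interp_proj_le.
- apply: (big_ind (fun x => 1 <= x)) => // [x y|n _]; first exact: mulr_ege1.
  by rewrite expr_ge1 ?spec_norm_interp_ge1 ?spec_norm_ge0.
Qed.

End TensorInterpolation.

Theorem theorem1 (R : realType) (d : nat) (N : 'I_d -> nat) (T : nat)
    (r : 'I_d -> nat) (G : tensor R d N T)
    (U : forall n : 'I_d, 'M[R]_(N n)) (s : 'I_d -> nat -> R)
    (V : forall n : 'I_d, 'M[R]_(ncols d N T n))
    (Phi : forall n : 'I_d, 'M[R]_(N n, r n))
    (sigma : forall n : 'I_d, 'S_(N n))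
    (Q : forall n : 'I_d, 'M[R]_(r n)) (Rf : forall n : 'I_d, 'M[R]_(r n, N n))
    (S : forall n : 'I_d, 'M[R]_(N n, r n)) :
  (0 < d)%N ->
  (forall n, (1 <= r n)%N /\ (r n < N n)%N) ->
  (forall n, is_svd (unfold G n) (U n) (s n) (V n)) ->
  (forall n, leading_cols (U n) (Phi n)) ->
  (forall n, is_cpqr (Phi n)^T (perm_mx (sigma n)) (Q n) (Rf n)) ->
  (forall n, leading_cols (perm_mx (sigma n) : 'M[R]_(N n)) (S n)) ->
  (forall n, (S n)^T *m Phi n \in unitmx) ->
  let Pi := fun n => Phi n *m invmx ((S n)^T *m Phi n) *m (S n)^T in
  frob (tensor_sub G (mode_prods G Pi))
    <= (\prod_(n < d) spec_norm (invmx ((S n)^T *m Phi n)))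
       * Num.sqrt (\sum_(n < d) \sum_(r n <= k < minn (N n) (ncols d N T n)) s n k ^+ 2).
Proof.
move=> _ r_bounds svdG Phi_lead _ S_lead SPhi_unit; cbv zeta.
have r_gt0 n : (0 < r n)%N by case: (r_bounds n).
have le_rN n : (r n <= N n)%N by case: (r_bounds n) => _ /ltnW.
have Phi_orth n : (Phi n)^T *m Phi n = 1%:M.
  by case: (svdG n) => UU *; apply: leading_cols_orthonormal (le_rN n) UU (Phi_lead n).
have S_orth n : (S n)^T *m S n = 1%:M.
  apply: leading_cols_orthonormal (le_rN n) _ (S_lead n).
  by rewrite tr_perm_mx -perm_mxM mulVg perm_mx1.
set kappa2 := \prod_(n <- enum 'I_d) spec_norm (invmx ((S n)^T *m Phi n)) ^+ 2.
have kappa2_ge0 : 0 <= kappa2 by rewrite prodr_ge0 // => n _; rewrite sqr_ge0.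
have -> : \prod_(n < d) spec_norm (invmx ((S n)^T *m Phi n)) = Num.sqrt kappa2.
  rewrite /kappa2 prodrXl sqrtr_sqr ger0_norm ?big_enum // prodr_ge0 // => n _.
  exact: spec_norm_ge0.
rewrite frobE -sqrtrM // ler_sqrt ?mulr_ge0 ?sumr_ge0 // => [|n _]; last first.
  by rewrite sumr_ge0 // => k _; rewrite sqr_ge0.
apply: le_trans (tdot_sub_interp_proj_le r_gt0 Phi_orth S_orth SPhi_unit _ (enum_uniq _)) _.
rewrite ler_wpM2l //; apply: le_trans (tdot_sub_mode_prod_seq_le _ (enum_uniq _) _ _) _.
- by move=> n; apply: orth_proj_tr.
- by move=> n; apply: orth_proj_id.
rewrite big_enum; apply: ler_sum => n _.
by rewrite (tdot_sub_mode_trunc_svd (le_rN n) (svdG n) (Phi_lead n)).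
Qed.
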